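(* Let $S\subseteq(0,1)$ be an open set having $0$ as a limit point, and let $f:S\to(0,1)$ be differentiable with $f'(p)=\Omega(f(p)/p)$ as $p\to 0$. Then every (possibly randomized) Bernoulli factory for $f$ that is fast satisfies $\mathbb E[N]=\Omega(f(p)/p)$ as $p\to0$; that is, there exist $C',\delta'>0$ such that $\mathbb E[N]\ge C' f(p)/p$ for all $p\in S\cap(0,\delta')$.
   Context: For positive functions $f_1,f_2$, $f_1(x)=\Omega(f_2(x))$ as $x\to x_0$ means there are constants $C,\delta>0$ with $f_1(x)\ge Cf_2(x)$ for all $x$ in the domain with $|x-x_0|<\delta$. Let $X=(X_i)$ be i.i.d. Bernoulli with parameter $p\in S$ and $U=(U_i)$ i.i.d. uniform on $(0,1)$, independent of $X$. A (possibly randomized) Bernoulli factory for $f$ consists of measurable stopping functions $\tau_i(x_1,u_1;\dots;x_i,u_i)\in\{0,1\}$ and measurable output functions $\gamma_n(x_1,u_1;\dots;x_n,u_n)\in\{0,1\}$; $N=\min\{i:\tau_i(X_1,U_1;\dots;X_i,U_i)=1\}$ is assumed finite almost surely, and the output $Y=\gamma_N(X_1,U_1;\dots;X_N,U_N)$ satisfies $\Pr[Y=1]=f(p)$ for all $p\in S$. The factory is fast if for every $p\in S$ there exist $A>0$, $\beta<1$ with $\Pr[N>n]\le A\beta^n$ for all $n$. *)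

From Stdlib Require Import Reals Lra Lia List Classical ClassicalEpsilon.
Open Scope R_scope.

(** Points of (0,1)^n are represented as u : nat -> R, only coordinates
    0..n-1 being relevant (coordinate j stands for U_{j+1}). *)

Definition in_box (n : nat) (a b : nat -> R) (u : nat -> R) : Prop :=
  forall i, (i < n)%nat -> a i < u i < b i.

Definition unit_cube (n : nat) : (nat -> R) -> Prop :=
  in_box n (fun _ => 0) (fun _ => 1).

Fixpoint vol (n : nat) (a b : nat -> R) : R :=
  match n with
  | O => 1
  | S m => vol m a b * (b m - a m)
  end.

(** v is the total volume of some countable cover of A ∩ (0,1)^n by open
    boxes (the flag c k says whether the k-th box is used). *)
Definition cover_sum (n : nat) (A : (nat -> R) -> Prop) (v : R) : Prop :=
  exists (c : nat -> bool) (a b : nat -> nat -> R),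
    (forall k i, a k i <= b k i) /\
    (forall u, unit_cube n u -> A u -> exists k, c k = true /\ in_box n (a k) (b k) u) /\
    infinite_sum (fun k => if c k then vol n (a k) (b k) else 0) v.

Definition is_glb (E : R -> Prop) (m : R) : Prop :=
  (forall v, E v -> m <= v) /\ (forall m', (forall v, E v -> m' <= v) -> m' <= m).

(** Lebesgue (outer) measure of A ∩ (0,1)^n, i.e. the probability that
    (U_1,...,U_n) lies in A. *)
Definition leb (n : nat) (A : (nat -> R) -> Prop) : R :=
  epsilon (inhabits 0) (fun m => is_glb (cover_sum n A) m).

(** Borel subsets of R^n (sets of u depending on coordinates < n). *)
Inductive borel (n : nat) : ((nat -> R) -> Prop) -> Prop :=
| borel_box : forall a b, borel n (in_box n a b)
| borel_compl : forall A, borel n A -> borel n (fun u => ~ A u)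
| borel_union : forall F : nat -> (nat -> R) -> Prop,
    (forall k, borel n (F k)) -> borel n (fun u => exists k, F k u)
| borel_ext : forall A B, borel n A -> (forall u, A u <-> B u) -> borel n B.

Fixpoint words (n : nat) : list (list bool) :=
  match n with
  | O => nil :: nil
  | S m => flat_map (fun w => (true :: w) :: (false :: w) :: nil) (words m)
  end.

Definition sumR (l : list R) : R := fold_right Rplus 0 l.

Definition wt (p : R) (w : list bool) : R :=
  fold_right (fun (b : bool) (acc : R) => (if b then p else 1 - p) * acc) 1 w.

(** the sequence x with x j = X_{j+1} given by the word w *)
Definition xof (w : list bool) : nat -> bool := fun j => nth j w false.

(** A (randomized) Bernoulli-factory scheme: stopping functions tau i and
    output functions gamma n (meaningful for i, n >= 1), taking the
    sequences x, u, of which only the coordinates < i (resp. < n) matter. *)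
Definition scheme := nat -> (nat -> bool) -> (nat -> R) -> bool.

Definition PrN_gt (tau : scheme) (p : R) (n : nat) : R :=
  sumR (map (fun w => wt p w *
         leb n (fun u => forall i, (1 <= i <= n)%nat -> tau i (xof w) u = false))
       (words n)).

Definition PrN_eq_Y1 (tau gamma : scheme) (p : R) (n : nat) : R :=
  sumR (map (fun w => wt p w *
         leb n (fun u => (forall i, (1 <= i < n)%nat -> tau i (xof w) u = false) /\
                         tau n (xof w) u = true /\ gamma n (xof w) u = true))
       (words n)).

Definition admissible (g : scheme) : Prop :=
  forall i, (1 <= i)%nat ->
    (forall x, borel i (fun u => g i x u = true)) /\
    (forall x x' u, (forall j, (j < i)%nat -> x j = x' j) -> g i x u = g i x' u).

Definition bernoulli_factory (Dom : R -> Prop) (f : R -> R) (tau gamma : scheme) : Prop :=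
  admissible tau /\ admissible gamma /\
  forall p, Dom p ->
    Un_cv (PrN_gt tau p) 0 /\                                  (* N < oo a.s. *)
    infinite_sum (fun k => PrN_eq_Y1 tau gamma p (S k)) (f p).

Definition fast (Dom : R -> Prop) (tau : scheme) : Prop :=
  forall p, Dom p -> exists A beta, A > 0 /\ beta < 1 /\
    forall n, PrN_gt tau p n <= A * beta ^ n.

(** E[N] >= c, with E[N] = sum_{n>=0} Pr[N > n] in [0, +oo] *)
Definition ExpN_ge (tau : scheme) (p c : R) : Prop :=
  forall e, infinite_sum (fun n => PrN_gt tau p n) e -> c <= e.

(* Write q = p (1 - t).  Passing from p to q scales the probability of each one by 1 - t and
   does not decrease that of each zero, so by Bernoulli's inequality
   Pr_q[w] >= (1 - t K(w)) Pr_p[w] for a word w with K(w) ones.  Summing over the words on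
   which the factory stops and outputs 1 gives f(p) - f(q) <= t E_p[K_N], and Wald's identity
   E_p[K_N] = p E_p[N] (only the inequality <= is needed) turns this into
   f(p) - f(q) <= (p - q) E_p[N].  Letting q increase to p yields f'(p) <= E_p[N].

   Probabilities over the uniforms are Lebesgue outer measures; the stopping events are Borel,
   hence Caratheodory-measurable, which gives the additivity used in Wald's identity. *)

From Stdlib Require Import Reals Lra Lia List Classical ClassicalEpsilon IndefiniteDescription
  Cantor FunctionalExtensionality PropExtensionality Wf_nat.
Open Scope R_scope.

Definition partial_sum (g : nat -> R) (M : nat) : R := sumR (map g (seq 0 M)).

Lemma sumR_app l1 l2 : sumR (l1 ++ l2) = sumR l1 + sumR l2.
Proof. induction l1 as [|x l1 IH]; simpl; [lra|rewrite IH; lra]. Qed.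

Lemma sumR_le {A} (F G : A -> R) l :
  (forall x, In x l -> F x <= G x) -> sumR (map F l) <= sumR (map G l).
Proof.
  induction l as [|x l IH]; intros H; simpl; [lra|].
  assert (F x <= G x) by (apply H; left; reflexivity).
  assert (sumR (map F l) <= sumR (map G l)) by (apply IH; intros; apply H; right; assumption).
  lra.
Qed.

Lemma partial_sum_S g M : partial_sum g (S M) = partial_sum g M + g M.
Proof. unfold partial_sum. rewrite seq_S, map_app, sumR_app. simpl. lra. Qed.

Lemma sum_f_R0_partial_sum g n : sum_f_R0 g n = partial_sum g (S n).
Proof.
  induction n as [|n IH]; [unfold partial_sum; simpl; lra|].
  rewrite partial_sum_S, <- IH. reflexivity.
Qed.

Lemma partial_sum_plus g h M :
  partial_sum (fun k => g k + h k) M = partial_sum g M + partial_sum h M.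
Proof. induction M as [|M IH]; [unfold partial_sum; simpl; lra|]. rewrite !partial_sum_S, IH. lra. Qed.

Lemma partial_sum_scal c g M : partial_sum (fun k => c * g k) M = c * partial_sum g M.
Proof. induction M as [|M IH]; [unfold partial_sum; simpl; lra|]. rewrite !partial_sum_S, IH. lra. Qed.

Lemma partial_sum_le g h M :
  (forall k, (k < M)%nat -> g k <= h k) -> partial_sum g M <= partial_sum h M.
Proof. intros H. apply sumR_le. intros k Hk. apply in_seq in Hk. apply H. lia. Qed.

Lemma partial_sum_geometric e M : 0 <= e -> partial_sum (fun k => e / 2 ^ S k) M <= e.
Proof.
  intros He. cut (partial_sum (fun k => e / 2 ^ S k) M = e - e / 2 ^ M).
  { intros ->. assert (0 <= e / 2 ^ M); [|lra].
    apply Rmult_le_pos; [lra|apply Rlt_le, Rinv_0_lt_compat, pow_lt; lra]. }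
  induction M as [|M IH]; [unfold partial_sum; simpl; field|].
  rewrite partial_sum_S, IH. simpl. field. apply pow_nonzero. lra.
Qed.

Lemma Un_cv_le_const u l s : Un_cv u l -> (forall n, u n <= s) -> l <= s.
Proof.
  intros Hc Hu. apply Rnot_lt_le. intros Hlt.
  destruct (Hc (l - s)) as [N HN]; [lra|]. specialize (HN N (le_n N)). specialize (Hu N).
  unfold Rdist in HN. apply Rabs_def2 in HN. lra.
Qed.

Lemma infinite_sum_ext g h l : (forall k, g k = h k) -> infinite_sum g l -> infinite_sum h l.
Proof.
  intros E H e He. destruct (H e He) as [N HN]. exists N. intros n Hn.
  rewrite <- (sum_eq g h) by auto. auto.
Qed.

Lemma infinite_sum_minus g h l1 l2 :
  infinite_sum g l1 -> infinite_sum h l2 -> infinite_sum (fun k => g k - h k) (l1 - l2).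
Proof.
  intros H1 H2 e He. destruct (CV_minus _ _ _ _ H1 H2 e He) as [N HN]. exists N.
  intros n Hn. rewrite minus_sum. auto.
Qed.

Lemma infinite_sum_zero : infinite_sum (fun _ => 0) 0.
Proof.
  intros e He. exists 0%nat. intros n _. rewrite sum_cte. unfold Rdist.
  rewrite Rmult_0_l, Rminus_diag, Rabs_R0. exact He.
Qed.

Lemma infinite_sum_single v : infinite_sum (fun k => if Nat.eqb k 0 then v else 0) v.
Proof.
  intros e He. exists 0%nat. intros n _.
  replace (sum_f_R0 _ n) with v; [unfold Rdist; rewrite Rminus_diag, Rabs_R0; exact He|].
  induction n as [|n IH]; simpl; [reflexivity|]. simpl in IH. lra.
Qed.

Lemma infinite_sum_ge_partial_sum g l M :
  (forall k, 0 <= g k) -> infinite_sum g l -> partial_sum g M <= l.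
Proof.
  intros Hg Hl. destruct M as [|M].
  - apply Rle_trans with (sum_f_R0 g 0); [simpl; apply Hg|apply sum_incr; auto].
  - rewrite <- sum_f_R0_partial_sum. apply sum_incr; auto.
Qed.

Lemma infinite_sum_nonneg g l : (forall k, 0 <= g k) -> infinite_sum g l -> 0 <= l.
Proof. intros Hg Hl. exact (infinite_sum_ge_partial_sum g l 0 Hg Hl). Qed.

Lemma infinite_sum_le_of_partial_sum_le g l s :
  infinite_sum g l -> (forall M, partial_sum g M <= s) -> l <= s.
Proof.
  intros Hl Hs. apply (Un_cv_le_const _ _ _ Hl). intros n.
  rewrite sum_f_R0_partial_sum. apply Hs.
Qed.

Lemma bounded_nonneg_series_cv g s :
  (forall k, 0 <= g k) -> (forall M, partial_sum g M <= s) ->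
  exists l, infinite_sum g l /\ l <= s.
Proof.
  intros Hg Hs. destruct (growing_cv (sum_f_R0 g)) as [l Hl].
  - intros n. simpl. specialize (Hg (S n)). lra.
  - exists s. intros x [n ->]. rewrite sum_f_R0_partial_sum. apply Hs.
  - exists l. split; [exact Hl|]. exact (infinite_sum_le_of_partial_sum_le g l s Hl Hs).
Qed.

Lemma sumR_incl_le {A} (F : A -> R) (l l' : list A) :
  (forall x, 0 <= F x) -> NoDup l -> incl l l' -> sumR (map F l) <= sumR (map F l').
Proof.
  intros HF Hnd. revert l'. induction Hnd as [|x l Hx Hnd IH]; intros l' Hincl.
  - simpl. induction l' as [|y l' IH']; simpl; [lra|].
    assert (0 <= sumR (map F l')) by (apply IH'; intros z []). specialize (HF y). lra.
  - assert (Hxl : In x l') by (apply Hincl; left; reflexivity).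
    destruct (in_split _ _ Hxl) as [l1 [l2 ->]].
    assert (incl l (l1 ++ l2)).
    { intros y Hy. assert (Hy' : In y (l1 ++ x :: l2)) by (apply Hincl; right; exact Hy).
      apply in_app_or in Hy'. apply in_or_app. destruct Hy' as [|[<-|]]; auto. contradiction. }
    specialize (IH _ H). rewrite map_app, sumR_app in *. simpl. lra.
Qed.

Lemma sumR_list_prod {A B} (F : A * B -> R) l1 l2 :
  sumR (map F (list_prod l1 l2)) = sumR (map (fun k => sumR (map (fun j => F (k, j)) l2)) l1).
Proof.
  induction l1 as [|k l1 IH]; simpl; [reflexivity|].
  rewrite map_app, sumR_app, IH, map_map. reflexivity.
Qed.

Definition on_pairs {X} (F : nat -> nat -> X) (m : nat) : X := F (fst (of_nat m)) (snd (of_nat m)).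

(* The first [M] Cantor indices are distinct pairs with both coordinates below [M]. *)
Lemma partial_sum_of_nat_le (T : nat -> nat -> R) M :
  (forall k j, 0 <= T k j) ->
  partial_sum (on_pairs T) M <= partial_sum (fun k => partial_sum (T k) M) M.
Proof.
  intros HT. unfold partial_sum at 1, on_pairs.
  rewrite <- (map_map of_nat (fun p => T (fst p) (snd p))).
  apply Rle_trans with (sumR (map (fun p => T (fst p) (snd p)) (list_prod (seq 0 M) (seq 0 M)))).
  - apply sumR_incl_le; [intros; apply HT| |].
    + apply NoDup_map_NoDup_ForallPairs; [|apply seq_NoDup].
      intros x y _ _ Hxy. rewrite <- (cancel_to_of x), <- (cancel_to_of y), Hxy. reflexivity.
    + intros [x y] Hin. apply in_map_iff in Hin. destruct Hin as [m [Hm Hmi]].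
      apply in_seq in Hmi. pose proof (to_nat_non_decreasing x y) as Hnd.
      rewrite <- Hm, cancel_to_of in Hnd. apply in_prod; apply in_seq; lia.
  - rewrite sumR_list_prod. apply Rle_refl.
Qed.

(** * Boxes and Lebesgue outer measure *)

Lemma vol_nonneg n a b : (forall i, a i <= b i) -> 0 <= vol n a b.
Proof.
  intros H. induction n as [|m IH]; simpl; [lra|].
  specialize (H m). apply Rmult_le_pos; lra.
Qed.

Definition set_coord (f : nat -> R) (i : nat) (m : R) : nat -> R :=
  fun j => if Nat.eqb j i then m else f j.

Lemma vol_ext n a b a' b' :
  (forall i, (i < n)%nat -> a i = a' i /\ b i = b' i) -> vol n a b = vol n a' b'.
Proof.
  induction n as [|n IH]; intros H; simpl; [reflexivity|].
  rewrite IH by (intros; apply H; lia). destruct (H n) as [-> ->]; [lia|reflexivity].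
Qed.

Lemma vol_split n a b i m : (i < n)%nat ->
  vol n a (set_coord b i m) + vol n (set_coord a i m) b = vol n a b.
Proof.
  induction n as [|n IH]; intros Hi; [lia|]. simpl. unfold set_coord at 2 4.
  destruct (Nat.eqb_spec n i) as [<-|Hne].
  - rewrite (vol_ext n a (set_coord b n m) a b), (vol_ext n (set_coord a n m) b a b); [ring| |];
      intros j Hj; unfold set_coord; destruct (Nat.eqb_spec j n); [lia|auto|lia|auto].
  - rewrite <- (IH ltac:(lia)). ring.
Qed.

Lemma vol_le_pow n a b w : (forall j, 0 <= b j - a j <= w) -> vol n a b <= w ^ n.
Proof.
  intros H. induction n as [|n IH]; simpl; [lra|].
  assert (0 <= vol n a b) by (apply vol_nonneg; intros j; specialize (H j); lra).
  specialize (H n). nra.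
Qed.

Lemma vol_thin_le n a b w i h : 1 <= w -> (forall j, 0 <= b j - a j <= w) -> (i < n)%nat ->
  b i - a i <= h -> vol n a b <= h * w ^ n.
Proof.
  intros Hw H Hi Hh. induction n as [|n IH]; [lia|]. simpl.
  assert (0 <= vol n a b) by (apply vol_nonneg; intros j; specialize (H j); lra).
  assert (1 <= w ^ n) by (apply pow_R1_Rle; lra).
  destruct (Nat.eq_dec i n) as [->|Hne].
  - pose proof (vol_le_pow n a b w H). specialize (H n).
    assert (vol n a b * (b n - a n) <= w ^ n * h) by (apply Rmult_le_compat; lra).
    assert (0 <= w ^ n * h * (w - 1)) by (apply Rmult_le_pos; [apply Rmult_le_pos|]; lra). nra.
  - assert (vol n a b <= h * w ^ n) by (apply IH; lia). specialize (H n).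
    assert (vol n a b * (b n - a n) <= h * w ^ n * w) by (apply Rmult_le_compat; lra). lra.
Qed.

Section OuterMeasure.

Variable n : nat.

Lemma cover_sum_nonneg A v : cover_sum n A v -> 0 <= v.
Proof.
  intros (c & a & b & Hab & _ & Hs). refine (infinite_sum_nonneg _ _ _ Hs).
  intros k. destruct (c k); [apply vol_nonneg; auto|lra].
Qed.

Lemma cover_sum_box A a b :
  (forall i, a i <= b i) -> (forall u, unit_cube n u -> A u -> in_box n a b u) ->
  cover_sum n A (vol n a b).
Proof.
  intros Hab Hc. exists (fun k => Nat.eqb k 0), (fun _ => a), (fun _ => b).
  split; [auto|]. split.
  - intros u Hu HA. exists 0%nat. auto.
  - refine (infinite_sum_ext _ _ _ _ (infinite_sum_single (vol n a b))).
    intros k. destruct (Nat.eqb k 0); reflexivity.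
Qed.

Lemma cover_sum_unit_cube A : cover_sum n A 1.
Proof.
  replace 1 with (vol n (fun _ => 0) (fun _ => 1)).
  - apply cover_sum_box; [intros; lra|auto].
  - clear A. induction n as [|m IH]; simpl; [reflexivity|]. rewrite IH. lra.
Qed.

Lemma leb_is_glb A : is_glb (cover_sum n A) (leb n A).
Proof.
  unfold leb. apply epsilon_spec.
  destruct (completeness (fun x => cover_sum n A (- x))) as [m [Hub Hlub]].
  - exists 0. intros x Hx. apply cover_sum_nonneg in Hx. lra.
  - exists (-1). cbv beta. replace (- -1) with 1 by lra. apply cover_sum_unit_cube.
  - exists (- m). split.
    + intros v Hv. assert (- v <= m) by (apply Hub; rewrite Ropp_involutive; exact Hv). lra.
    + intros m' Hm'. assert (m <= - m') by (apply Hlub; intros x Hx; apply Hm' in Hx; lra). lra.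
Qed.

Lemma leb_le_cover_sum A v : cover_sum n A v -> leb n A <= v.
Proof. apply (proj1 (leb_is_glb A)). Qed.

Lemma leb_ge A s : (forall v, cover_sum n A v -> s <= v) -> s <= leb n A.
Proof. apply (proj2 (leb_is_glb A)). Qed.

Lemma leb_nonneg A : 0 <= leb n A.
Proof. apply leb_ge, cover_sum_nonneg. Qed.

Lemma leb_approx A e : 0 < e -> exists v, cover_sum n A v /\ v < leb n A + e.
Proof.
  intros He. apply NNPP. intros Hno.
  assert (leb n A + e <= leb n A); [|lra].
  apply leb_ge. intros v Hv. apply Rnot_lt_le. intros Hlt. apply Hno. exists v. auto.
Qed.

Lemma leb_mono (A B : (nat -> R) -> Prop) :
  (forall u, unit_cube n u -> A u -> B u) -> leb n A <= leb n B.
Proof.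
  intros H. apply leb_ge. intros v (c & a & b & Hab & Hc & Hs). apply leb_le_cover_sum.
  exists c, a, b. split; [|split]; auto.
Qed.

Lemma leb_ext (A B : (nat -> R) -> Prop) : (forall u, A u <-> B u) -> leb n A = leb n B.
Proof.
  intros H. f_equal. apply functional_extensionality. intros u.
  apply propositional_extensionality. apply H.
Qed.

Lemma leb_empty : leb n (fun _ => False) = 0.
Proof.
  apply Rle_antisym; [|apply leb_nonneg]. apply leb_le_cover_sum.
  exists (fun _ => false), (fun _ _ => 0), (fun _ _ => 0).
  split; [intros; lra|]. split; [intros u _ []|exact infinite_sum_zero].
Qed.

Lemma cover_sum_countable_union (B : nat -> (nat -> R) -> Prop) V s :
  (forall k, cover_sum n (B k) (V k)) -> (forall M, partial_sum V M <= s) ->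
  exists v, cover_sum n (fun u => exists k, B k u) v /\ v <= s.
Proof.
  intros HV Hs.
  destruct (functional_choice _ HV) as [c Hc].
  destruct (functional_choice _ Hc) as [a Ha].
  destruct (functional_choice _ Ha) as [b Hb].
  set (T := fun k j => if c k j then vol n (a k j) (b k j) else 0).
  assert (HT : forall k j, 0 <= T k j).
  { intros k j. unfold T. destruct (c k j); [apply vol_nonneg, Hb|lra]. }
  destruct (bounded_nonneg_series_cv (on_pairs T) s) as [v [Hv Hvs]].
  - intros m. apply HT.
  - intros M. eapply Rle_trans; [apply (partial_sum_of_nat_le T M HT)|].
    eapply Rle_trans; [|apply (Hs M)]. apply partial_sum_le. intros k _.
    apply infinite_sum_ge_partial_sum; [apply HT|apply Hb].
  - exists v. split; [|exact Hvs].
    exists (on_pairs c), (on_pairs a), (on_pairs b). split; [|split].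
    + intros m. apply Hb.
    + intros u Hu [k Hk]. destruct (proj1 (proj2 (Hb k)) u Hu Hk) as [j Hj].
      exists (to_nat (k, j)). unfold on_pairs. rewrite cancel_of_to. exact Hj.
    + exact Hv.
Qed.

Lemma leb_countable_subadditive (B : nat -> (nat -> R) -> Prop) s :
  (forall M, partial_sum (fun k => leb n (B k)) M <= s) ->
  leb n (fun u => exists k, B k u) <= s.
Proof.
  intros Hs. apply le_epsilon. intros e He.
  assert (Hcov : forall k, exists v, cover_sum n (B k) v /\ v < leb n (B k) + e / 2 ^ S k).
  { intros k. apply leb_approx. apply Rdiv_lt_0_compat; [exact He|apply pow_lt; lra]. }
  destruct (functional_choice _ Hcov) as [V HV].
  destruct (cover_sum_countable_union B V (s + e)) as [v [Hv Hvs]].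
  - intros k. apply HV.
  - intros M. apply Rle_trans with (partial_sum (fun k => leb n (B k) + e / 2 ^ S k) M).
    + apply partial_sum_le. intros k _. apply Rlt_le, HV.
    + rewrite partial_sum_plus. pose proof (Hs M). pose proof (partial_sum_geometric e M). lra.
  - apply Rle_trans with v; [apply leb_le_cover_sum|]; assumption.
Qed.

Lemma leb_union_le (A B : (nat -> R) -> Prop) :
  leb n (fun u => A u \/ B u) <= leb n A + leb n B.
Proof.
  set (F := fun k : nat => match k with 0%nat => A | 1%nat => B | _ => fun _ => False end).
  apply Rle_trans with (leb n (fun u => exists k, F k u)).
  { apply leb_mono. intros u _ [H|H]; [exists 0%nat|exists 1%nat]; exact H. }
  apply leb_countable_subadditive. intros M.
  assert (HA := leb_nonneg A). assert (HB := leb_nonneg B).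
  destruct M as [|[|M]]; [unfold partial_sum; simpl; lra..|].
  induction M as [|M IH]; [unfold partial_sum; simpl; lra|].
  rewrite partial_sum_S. simpl (F (S (S M))). rewrite leb_empty. lra.
Qed.

End OuterMeasure.

Lemma leb_extend n A : leb (S n) A <= leb n A.
Proof.
  apply leb_ge. intros v (c & a & b & Hab & Hcov & Hs). apply leb_le_cover_sum.
  exists c, (fun k => set_coord (a k) n 0), (fun k => set_coord (b k) n 1). split; [|split].
  - intros k i. unfold set_coord. destruct (Nat.eqb i n); [lra|auto].
  - intros u Hu HA. destruct (Hcov u) as [k [Hk Hb]]; [intros i Hi; apply Hu; lia|exact HA|].
    exists k. split; [exact Hk|]. intros i Hi. unfold set_coord.
    destruct (Nat.eqb_spec i n) as [->|]; [apply Hu|apply Hb]; lia.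
  - refine (infinite_sum_ext _ _ _ _ Hs). intros k. destruct (c k); [|reflexivity]. simpl.
    rewrite (vol_ext n (set_coord (a k) n 0) (set_coord (b k) n 1) (a k) (b k)).
    + unfold set_coord. rewrite Nat.eqb_refl. ring.
    + intros i Hi. unfold set_coord. destruct (Nat.eqb_spec i n); [lia|auto].
Qed.

Section Caratheodory.

Variable n : nat.

Definition measurable (T : (nat -> R) -> Prop) : Prop :=
  forall A, leb n (fun u => A u /\ T u) + leb n (fun u => A u /\ ~ T u) <= leb n A.

Lemma measurable_ext T T' : (forall u, T u <-> T' u) -> measurable T -> measurable T'.
Proof.
  intros E H A.
  rewrite (leb_ext n (fun u => A u /\ T' u) (fun u => A u /\ T u)),
    (leb_ext n (fun u => A u /\ ~ T' u) (fun u => A u /\ ~ T u)) by (intros u; rewrite E; tauto).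
  apply H.
Qed.

Lemma measurable_full : measurable (fun _ => True).
Proof.
  intros A.
  rewrite (leb_ext n (fun u => A u /\ True) A),
    (leb_ext n (fun u => A u /\ ~ True) (fun _ => False)) by (intros u; tauto).
  rewrite leb_empty. lra.
Qed.

Lemma measurable_compl T : measurable T -> measurable (fun u => ~ T u).
Proof.
  intros H A. rewrite (leb_ext n (fun u => A u /\ ~ ~ T u) (fun u => A u /\ T u)).
  - specialize (H A). lra.
  - intros u. split; [intros [? ?]; split; [|apply NNPP]|]; tauto.
Qed.

Lemma measurable_union T T' : measurable T -> measurable T' -> measurable (fun u => T u \/ T' u).
Proof.
  intros H H' A.
  pose proof (H A). pose proof (H' (fun u => A u /\ ~ T u)).
  pose proof (leb_union_le n (fun u => A u /\ T u) (fun u => (A u /\ ~ T u) /\ T' u)).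
  rewrite (leb_ext n (fun u => A u /\ ~ (T u \/ T' u)) (fun u => (A u /\ ~ T u) /\ ~ T' u))
    by (intros u; tauto).
  assert (leb n (fun u => A u /\ (T u \/ T' u))
          <= leb n (fun u => A u /\ T u \/ (A u /\ ~ T u) /\ T' u)).
  { apply leb_mono. intros u _ [Ha HT]. destruct (classic (T u)); tauto. }
  lra.
Qed.

Lemma measurable_inter T T' : measurable T -> measurable T' -> measurable (fun u => T u /\ T' u).
Proof.
  intros H H'. refine (measurable_ext _ _ _
    (measurable_compl _ (measurable_union _ _ (measurable_compl _ H) (measurable_compl _ H')))).
  intros u. split; [intros Hu; split; apply NNPP; tauto|tauto].
Qed.

Definition union_below (T : nat -> (nat -> R) -> Prop) (m : nat) (u : nat -> R) : Prop :=
  exists k, (k < m)%nat /\ T k u.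

Lemma measurable_finite_union (T : nat -> (nat -> R) -> Prop) m :
  (forall k, measurable (T k)) -> measurable (union_below T m).
Proof.
  intros HT. induction m as [|m IH].
  - refine (measurable_ext _ _ _ (measurable_compl _ measurable_full)).
    intros u. split; [tauto|]. intros [k [Hk _]]. lia.
  - refine (measurable_ext _ _ _ (measurable_union _ _ IH (HT m))). intros u. split.
    + intros [[k [Hk H]]|H]; [exists k|exists m]; split; auto; lia.
    + intros [k [Hk H]]. destruct (Nat.eq_dec k m) as [->|]; [right; exact H|].
      left. exists k. split; [lia|exact H].
Qed.

Lemma leb_disjointified_le (T : nat -> (nat -> R) -> Prop) A m :
  (forall k, measurable (T k)) ->
  partial_sum (fun k => leb n (fun u => A u /\ T k u /\ ~ union_below T k u)) m
  <= leb n (fun u => A u /\ union_below T m u).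
Proof.
  intros HT. induction m as [|m IH]; [apply leb_nonneg|]. rewrite partial_sum_S.
  pose proof (measurable_finite_union T m HT (fun u => A u /\ union_below T (S m) u)) as H.
  cbv beta in H.
  rewrite (leb_ext n (fun u => (A u /\ union_below T (S m) u) /\ union_below T m u)
                    (fun u => A u /\ union_below T m u)),
    (leb_ext n (fun u => (A u /\ union_below T (S m) u) /\ ~ union_below T m u)
               (fun u => A u /\ T m u /\ ~ union_below T m u)) in H.
  - lra.
  - intros u. split.
    + intros [[Ha [k [Hk Hkt]]] Hn]. split; [exact Ha|]. destruct (Nat.eq_dec k m) as [->|]; [tauto|].
      exfalso. apply Hn. exists k. split; [lia|exact Hkt].
    + intros [Ha [Hm Hn]]. split; [|exact Hn]. split; [exact Ha|]. exists m. auto.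
  - intros u. split.
    + intros [[Ha _] H']. auto.
    + intros [Ha [k [Hk Hkt]]]. split; [split; [exact Ha|]|]; exists k; split; auto; lia.
Qed.

Lemma measurable_countable_union (T : nat -> (nat -> R) -> Prop) :
  (forall k, measurable (T k)) -> measurable (fun u => exists k, T k u).
Proof.
  intros HT A.
  assert (Hcover : leb n (fun u => A u /\ exists k, T k u)
      <= leb n (fun u => exists k, A u /\ T k u /\ ~ union_below T k u)).
  { apply leb_mono. intros u _ [Ha Hex]. destruct (dec_inh_nat_subset_has_unique_least_element
      (fun k => T k u)) as [k [[Hk Hmin] _]]; [intros k; apply classic|exact Hex|].
    exists k. split; [exact Ha|]. split; [exact Hk|].
    intros [j [Hj Hjt]]. specialize (Hmin j Hjt). lia. }
  assert (leb n (fun u => exists k, A u /\ T k u /\ ~ union_below T k u)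
          <= leb n A - leb n (fun u => A u /\ ~ exists k, T k u)); [|lra].
  apply leb_countable_subadditive. intros m.
  pose proof (leb_disjointified_le T A m HT). pose proof (measurable_finite_union T m HT A).
  assert (leb n (fun u => A u /\ ~ exists k, T k u)
          <= leb n (fun u => A u /\ ~ union_below T m u)).
  { apply leb_mono. intros u _ [Ha Hn]. split; [exact Ha|].
    intros [k [_ Hk]]. apply Hn. exists k. exact Hk. }
  lra.
Qed.

(* Each box of the cover is cut by the hyperplane [u i = c] into two boxes whose volumes add up. *)
Lemma cover_sum_cut A i c v : (i < n)%nat -> cover_sum n A v ->
  exists v1, cover_sum n (fun u => A u /\ u i < c) v1 /\ cover_sum n (fun u => A u /\ c < u i) (v - v1).
Proof.
  intros Hi (cc & a & b & Hab & Hcov & Hs).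
  set (m := fun k => Rmax (a k i) (Rmin (b k i) c)).
  assert (Hm : forall k, a k i <= m k <= b k i).
  { intros k. split; [apply Rmax_l|apply Rmax_lub; [apply Hab|apply Rmin_l]]. }
  assert (Hlow : forall k j, a k j <= set_coord (b k) i (m k) j).
  { intros k j. unfold set_coord. destruct (Nat.eqb_spec j i) as [->|]; [apply Hm|apply Hab]. }
  assert (Hhigh : forall k j, set_coord (a k) i (m k) j <= b k j).
  { intros k j. unfold set_coord. destruct (Nat.eqb_spec j i) as [->|]; [apply Hm|apply Hab]. }
  set (t1 := fun k => if cc k then vol n (a k) (set_coord (b k) i (m k)) else 0).
  destruct (bounded_nonneg_series_cv t1 v) as [v1 [Hv1 _]].
  - intros k. unfold t1. destruct (cc k); [apply vol_nonneg, Hlow|lra].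
  - intros M. refine (Rle_trans _ _ _ _ (infinite_sum_ge_partial_sum _ _ M _ Hs)).
    + apply partial_sum_le. intros k _. unfold t1. destruct (cc k); [|lra].
      rewrite <- (vol_split n (a k) (b k) i (m k) Hi). pose proof (vol_nonneg n _ _ (Hhigh k)). lra.
    + intros k. destruct (cc k); [apply vol_nonneg, Hab|lra].
  - exists v1. split.
    + exists cc, a, (fun k => set_coord (b k) i (m k)). split; [exact Hlow|split; [|exact Hv1]].
      intros u Hu [HA Hc]. destruct (Hcov u Hu HA) as [k [Hk Hb]]. exists k. split; [exact Hk|].
      intros j Hj. destruct (Hb j Hj) as [H1 H2]. split; [exact H1|]. unfold set_coord.
      destruct (Nat.eqb_spec j i) as [->|]; [|exact H2].
      apply Rlt_le_trans with (Rmin (b k i) c); [apply Rmin_glb_lt; auto|apply Rmax_r].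
    + exists cc, (fun k => set_coord (a k) i (m k)), b. split; [exact Hhigh|split].
      * intros u Hu [HA Hc]. destruct (Hcov u Hu HA) as [k [Hk Hb]]. exists k. split; [exact Hk|].
        intros j Hj. destruct (Hb j Hj) as [H1 H2]. split; [|exact H2]. unfold set_coord.
        destruct (Nat.eqb_spec j i) as [->|]; [|exact H1].
        apply Rmax_lub_lt; [exact H1|]. apply Rle_lt_trans with c; [apply Rmin_r|exact Hc].
      * refine (infinite_sum_ext _ _ _ _ (infinite_sum_minus _ _ _ _ Hs Hv1)). intros k.
        unfold t1. destruct (cc k); [|lra]. rewrite <- (vol_split n (a k) (b k) i (m k) Hi). ring.
Qed.

Lemma leb_cut A i c : (i < n)%nat ->
  leb n (fun u => A u /\ u i < c) + leb n (fun u => A u /\ c < u i) <= leb n A.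
Proof.
  intros Hi. apply leb_ge. intros v Hv.
  destruct (cover_sum_cut A i c v Hi Hv) as [v1 [Hv1 Hv2]].
  apply leb_le_cover_sum in Hv1. apply leb_le_cover_sum in Hv2. lra.
Qed.

Lemma leb_hyperplane i c : (i < n)%nat -> leb n (fun u => u i = c) = 0.
Proof.
  intros Hi. apply Rle_antisym; [|apply leb_nonneg].
  apply le_epsilon. intros e He. rewrite Rplus_0_l.
  assert (H3 : 1 <= 3 ^ n) by (apply pow_R1_Rle; lra).
  set (eta := Rmin e 1 / (2 * 3 ^ n)).
  assert (Heta : 0 < eta) by (apply Rdiv_lt_0_compat; [apply Rmin_glb_lt|]; lra).
  assert (Hwidth : 2 * eta * 3 ^ n = Rmin e 1) by (unfold eta; field; lra).
  pose proof (Rmin_l e 1). pose proof (Rmin_r e 1).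
  set (a := set_coord (fun _ => -1) i (c - eta)). set (b := set_coord (fun _ => 2) i (c + eta)).
  assert (Hw : forall j, 0 <= b j - a j <= 3).
  { intros j. unfold a, b, set_coord. destruct (Nat.eqb j i); nra. }
  apply Rle_trans with (vol n a b).
  - apply leb_le_cover_sum, cover_sum_box; [intros j; specialize (Hw j); lra|].
    intros u Hu Hc j Hj. specialize (Hu j Hj). unfold a, b, set_coord.
    destruct (Nat.eqb_spec j i) as [->|]; lra.
  - apply Rle_trans with (2 * eta * 3 ^ n); [|lra].
    apply (vol_thin_le n a b 3 i); [lra|exact Hw|exact Hi|].
    unfold a, b, set_coord. rewrite Nat.eqb_refl. lra.
Qed.

Lemma measurable_lt i c : (i < n)%nat -> measurable (fun u => u i < c).
Proof.
  intros Hi A. pose proof (leb_cut A i c Hi).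
  pose proof (leb_union_le n (fun u => A u /\ c < u i) (fun u => u i = c)) as Hunion.
  rewrite leb_hyperplane in Hunion by exact Hi.
  assert (leb n (fun u => A u /\ ~ u i < c) <= leb n (fun u => (A u /\ c < u i) \/ u i = c)).
  { apply leb_mono. intros u _ [Ha Hn]. destruct (Rtotal_order (u i) c) as [|[|]]; tauto. }
  lra.
Qed.

Lemma measurable_null Z : leb n Z = 0 -> measurable Z.
Proof.
  intros HZ A. assert (leb n (fun u => A u /\ Z u) <= leb n Z) by (apply leb_mono; tauto).
  assert (leb n (fun u => A u /\ ~ Z u) <= leb n A) by (apply leb_mono; tauto). lra.
Qed.

Lemma measurable_gt i c : (i < n)%nat -> measurable (fun u => c < u i).
Proof.
  intros Hi. refine (measurable_ext _ _ _ (measurable_compl _ (measurable_union _ _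
    (measurable_lt i c Hi) (measurable_null _ (leb_hyperplane i c Hi))))).
  intros u. destruct (Rtotal_order (u i) c) as [|[|]]; lra.
Qed.

Lemma measurable_box a b : measurable (in_box n a b).
Proof.
  cut (forall m, (m <= n)%nat -> measurable (fun u => forall i, (i < m)%nat -> a i < u i < b i)).
  { intros H. apply H. lia. }
  induction m as [|m IH]; intros Hm.
  - refine (measurable_ext _ _ _ measurable_full). intros u. split; [intros _ i Hi; lia|tauto].
  - refine (measurable_ext _ _ _ (measurable_inter _ _ (IH ltac:(lia))
      (measurable_inter _ _ (measurable_gt m (a m) ltac:(lia)) (measurable_lt m (b m) ltac:(lia))))).
    intros u. split.
    + intros [H1 H2] i Hi. destruct (Nat.eq_dec i m) as [->|]; [exact H2|apply H1; lia].
    + intros H. split; [intros i Hi; apply H; lia|apply H; lia].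
Qed.

Lemma borel_measurable T : borel n T -> measurable T.
Proof.
  induction 1.
  - apply measurable_box.
  - apply measurable_compl. assumption.
  - apply measurable_countable_union. assumption.
  - apply (measurable_ext A); assumption.
Qed.

End Caratheodory.

Definition sum_words (n : nat) (F : list bool -> R) : R := sumR (map F (words n)).

Lemma words_length n w : In w (words n) -> length w = n.
Proof.
  revert w. induction n as [|n IH]; simpl; intros w Hw; [destruct Hw as [<-|[]]; reflexivity|].
  apply in_flat_map in Hw. destruct Hw as [v [Hv Hw]].
  destruct Hw as [<-|[<-|[]]]; simpl; f_equal; auto.
Qed.

Lemma sum_words_le n F G :
  (forall w, length w = n -> F w <= G w) -> sum_words n F <= sum_words n G.
Proof. intros H. apply sumR_le. intros w Hw. apply H, words_length, Hw. Qed.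

Lemma sum_words_ext n F G : (forall w, F w = G w) -> sum_words n F = sum_words n G.
Proof. intros H. unfold sum_words. f_equal. apply map_ext, H. Qed.

Lemma sum_words_plus n F G : sum_words n (fun w => F w + G w) = sum_words n F + sum_words n G.
Proof. unfold sum_words. induction (words n) as [|w l IH]; simpl; [ring|]. rewrite IH. ring. Qed.

Lemma sum_words_minus n F G : sum_words n (fun w => F w - G w) = sum_words n F - sum_words n G.
Proof. unfold sum_words. induction (words n) as [|w l IH]; simpl; [ring|]. rewrite IH. ring. Qed.

Lemma sum_words_scal n c F : sum_words n (fun w => c * F w) = c * sum_words n F.
Proof. unfold sum_words. induction (words n) as [|w l IH]; simpl; [ring|]. rewrite IH. ring. Qed.

Lemma sum_words_nonneg n F : (forall w, 0 <= F w) -> 0 <= sum_words n F.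
Proof.
  intros H. unfold sum_words. induction (words n) as [|w l IH]; simpl; [lra|]. specialize (H w). lra.
Qed.

Lemma sum_words_cons n F : sum_words (S n) F = sum_words n (fun w => F (true :: w) + F (false :: w)).
Proof.
  unfold sum_words. simpl. induction (words n) as [|w l IH]; simpl; [reflexivity|]. rewrite IH. ring.
Qed.

Lemma sum_words_snoc n F :
  sum_words (S n) F = sum_words n (fun w => F (w ++ true :: nil) + F (w ++ false :: nil)).
Proof.
  revert F. induction n as [|n IH]; intros F; [unfold sum_words; simpl; ring|].
  rewrite sum_words_cons, IH, sum_words_cons. apply sum_words_ext. intros w. simpl. ring.
Qed.

Lemma wt_snoc p w x : wt p (w ++ x :: nil) = wt p w * (if x then p else 1 - p).
Proof. induction w as [|b w IH]; simpl; [ring|]. rewrite IH. ring. Qed.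

Lemma wt_nonneg p w : 0 <= p <= 1 -> 0 <= wt p w.
Proof.
  intros Hp. induction w as [|b w IH]; simpl; [lra|].
  apply Rmult_le_pos; [destruct b; lra|exact IH].
Qed.

Definition ones (w : list bool) : R :=
  fold_right (fun (b : bool) acc => (if b then 1 else 0) + acc) 0 w.

Lemma ones_snoc w x : ones (w ++ x :: nil) = ones w + (if x then 1 else 0).
Proof. induction w as [|b w IH]; simpl; [ring|]. rewrite IH. ring. Qed.

Lemma ones_nonneg w : 0 <= ones w.
Proof. induction w as [|b w IH]; simpl; [lra|]. destruct b; lra. Qed.

(* Bernoulli's inequality, one factor [1 - t] per one of [w]. *)
Lemma wt_thinned_ge p t w : 0 <= p <= 1 -> 0 <= t <= 1 ->
  wt p w * (1 - t * ones w) <= wt (p * (1 - t)) w.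
Proof.
  intros Hp Ht. induction w as [|b w IH]; simpl; [lra|].
  assert (0 <= wt p w) by (apply wt_nonneg; lra).
  assert (0 <= wt (p * (1 - t)) w) by (apply wt_nonneg; nra).
  pose proof (ones_nonneg w). destruct b.
  - assert (p * (1 - t) * (wt p w * (1 - t * ones w)) <= p * (1 - t) * wt (p * (1 - t)) w)
      by (apply Rmult_le_compat_l; nra).
    assert (0 <= p * wt p w * t * t * ones w) by (repeat apply Rmult_le_pos; lra).
    nra.
  - assert ((1 - p) * (wt p w * (1 - t * ones w)) <= (1 - p) * wt (p * (1 - t)) w)
      by (apply Rmult_le_compat_l; lra).
    assert ((1 - p) * wt (p * (1 - t)) w <= (1 - p * (1 - t)) * wt (p * (1 - t)) w)
      by (apply Rmult_le_compat_r; nra).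
    nra.
Qed.

Lemma xof_snoc v x j : (j < length v)%nat -> xof (v ++ x :: nil) j = xof v j.
Proof. intros H. apply app_nth1, H. Qed.

(** * The stopping time *)

Section StoppingTime.

Variable tau : scheme.
Hypothesis tau_admissible : admissible tau.

Definition survives (n : nat) (w : list bool) : R :=
  leb n (fun u => forall i, (1 <= i <= n)%nat -> tau i (xof w) u = false).

Definition stops_at (n : nat) (w : list bool) : R :=
  leb n (fun u => (forall i, (1 <= i < n)%nat -> tau i (xof w) u = false) /\ tau n (xof w) u = true).

Lemma PrN_gt_sum_words p n : PrN_gt tau p n = sum_words n (fun w => wt p w * survives n w).
Proof. reflexivity. Qed.

Lemma PrN_gt_nonneg p n : 0 <= p <= 1 -> 0 <= PrN_gt tau p n.
Proof.
  intros Hp. apply sum_words_nonneg. intros w.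
  apply Rmult_le_pos; [apply wt_nonneg, Hp|apply leb_nonneg].
Qed.

(* Surviving [length v] steps splits into surviving one more step or stopping at the next;
   measurability of the event [tau (S n) = true] makes the outer measure additive on the split. *)
Lemma survives_snoc_split v x :
  survives (S (length v)) (v ++ x :: nil) + stops_at (S (length v)) (v ++ x :: nil)
  <= survives (length v) v.
Proof.
  set (n := length v). set (w := v ++ x :: nil).
  set (A := fun u => forall i, (1 <= i <= n)%nat -> tau i (xof v) u = false).
  set (T := fun u => tau (S n) (xof w) u = true).
  assert (HT : measurable (S n) T) by (apply borel_measurable, (tau_admissible (S n)); lia).
  assert (Hsame : forall i u, (1 <= i <= n)%nat -> tau i (xof w) u = tau i (xof v) u).
  { intros i u Hi. apply (tau_admissible i ltac:(lia)).
    intros j Hj. apply xof_snoc. unfold n in Hi. lia. }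
  assert (survives (S n) w <= leb (S n) (fun u => A u /\ ~ T u)).
  { apply leb_mono. intros u _ Hu. split.
    - intros i Hi. rewrite <- Hsame by lia. apply Hu. lia.
    - unfold T. rewrite (Hu (S n)) by lia. discriminate. }
  assert (stops_at (S n) w <= leb (S n) (fun u => A u /\ T u)).
  { apply leb_mono. intros u _ [Hu Ht]. split; [|exact Ht].
    intros i Hi. rewrite <- Hsame by lia. apply Hu. lia. }
  pose proof (HT A). pose proof (leb_extend n A). change (survives n v) with (leb n A). lra.
Qed.

Variable p : R.
Hypothesis p_prob : 0 <= p <= 1.

(* [E[K_n ; N > n]] and [E[K_n ; N = n]], where [K_n] counts the ones among [X_1..X_n]. *)
Definition ones_while_alive (n : nat) : R := sum_words n (fun w => wt p w * survives n w * ones w).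
Definition ones_at_stop (n : nat) : R := sum_words n (fun w => wt p w * stops_at n w * ones w).

Lemma ones_wald_step n :
  ones_while_alive (S n) + ones_at_stop (S n) <= ones_while_alive n + p * PrN_gt tau p n.
Proof.
  unfold ones_while_alive, ones_at_stop.
  rewrite <- sum_words_plus, PrN_gt_sum_words, <- sum_words_scal, <- sum_words_plus, sum_words_snoc.
  apply sum_words_le. intros v Hv. rewrite !wt_snoc, !ones_snoc.
  pose proof (survives_snoc_split v true) as Htrue. pose proof (survives_snoc_split v false) as Hfalse.
  rewrite Hv in Htrue, Hfalse.
  assert (0 <= wt p v) by (apply wt_nonneg; lra). pose proof (ones_nonneg v).
  set (W := wt p v) in *. set (K := ones v) in *. set (B := survives n v) in *.
  set (b1 := survives (S n) (v ++ true :: nil)) in *.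
  set (g1 := stops_at (S n) (v ++ true :: nil)) in *.
  set (b0 := survives (S n) (v ++ false :: nil)) in *.
  set (g0 := stops_at (S n) (v ++ false :: nil)) in *.
  assert (p * (K + 1) * (b1 + g1) <= p * (K + 1) * B) by (apply Rmult_le_compat_l; nra).
  assert ((1 - p) * K * (b0 + g0) <= (1 - p) * K * B) by (apply Rmult_le_compat_l; nra).
  assert (W * (p * (K + 1) * (b1 + g1) + (1 - p) * K * (b0 + g0))
          <= W * (p * (K + 1) * B + (1 - p) * K * B)) by (apply Rmult_le_compat_l; lra).
  simpl. lra.
Qed.

(* Wald's identity [E[K_N] = p E[N]], truncated at [M] and in the inequality form needed. *)
Lemma ones_at_stop_le_wald M :
  partial_sum (fun n => ones_at_stop (S n)) M <= p * partial_sum (PrN_gt tau p) M.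
Proof.
  cut (ones_while_alive M + partial_sum (fun n => ones_at_stop (S n)) M
       <= p * partial_sum (PrN_gt tau p) M).
  - intros H. assert (0 <= ones_while_alive M); [|lra].
    apply sum_words_nonneg. intros w.
    apply Rmult_le_pos; [apply Rmult_le_pos; [apply wt_nonneg; lra|apply leb_nonneg]|apply ones_nonneg].
  - induction M as [|M IH]; [unfold ones_while_alive, sum_words, partial_sum; simpl; lra|].
    rewrite !partial_sum_S. pose proof (ones_wald_step M). lra.
Qed.

End StoppingTime.

Definition stops_with_one (tau gamma : scheme) (n : nat) (w : list bool) : R :=
  leb n (fun u => (forall i, (1 <= i < n)%nat -> tau i (xof w) u = false) /\
                  tau n (xof w) u = true /\ gamma n (xof w) u = true).

Lemma PrN_eq_Y1_sum_words tau gamma p n :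
  PrN_eq_Y1 tau gamma p n = sum_words n (fun w => wt p w * stops_with_one tau gamma n w).
Proof. reflexivity. Qed.

Lemma PrN_eq_Y1_thinned_le tau gamma p t n : 0 <= p <= 1 -> 0 <= t <= 1 ->
  PrN_eq_Y1 tau gamma p n - PrN_eq_Y1 tau gamma (p * (1 - t)) n <= t * ones_at_stop tau p n.
Proof.
  intros Hp Ht. rewrite !PrN_eq_Y1_sum_words. unfold ones_at_stop.
  rewrite <- sum_words_minus, <- sum_words_scal. apply sum_words_le. intros w _.
  set (Y1 := stops_with_one tau gamma n w).
  assert (HY1 : 0 <= Y1) by apply leb_nonneg.
  assert (HY1_stop : Y1 <= stops_at tau n w) by (apply leb_mono; intros u _ [H1 [H2 _]]; auto).
  pose proof (wt_thinned_ge p t w Hp Ht).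
  assert (0 <= wt p w) by (apply wt_nonneg; lra). pose proof (ones_nonneg w).
  assert ((wt p w - wt (p * (1 - t)) w) * Y1 <= (t * wt p w * ones w) * Y1)
    by (apply Rmult_le_compat_r; nra).
  assert ((t * wt p w * ones w) * Y1 <= (t * wt p w * ones w) * stops_at tau n w)
    by (apply Rmult_le_compat_l; [apply Rmult_le_pos; [apply Rmult_le_pos|]|]; lra).
  lra.
Qed.

Lemma factory_increment_le Dom f tau gamma p q e :
  bernoulli_factory Dom f tau gamma -> Dom p -> Dom q -> 0 <= q < p -> p <= 1 ->
  infinite_sum (PrN_gt tau p) e -> f p - f q <= (p - q) * e.
Proof.
  intros [Htau [_ Hfactory]] Hp Hq Hqp Hp1 He.
  set (t := (p - q) / p).
  assert (Htp : t * p = p - q) by (unfold t; field; lra).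
  assert (Ht : 0 <= t <= 1) by (split; nra).
  assert (Hq_thin : q = p * (1 - t)) by (unfold t; field; lra).
  apply (infinite_sum_le_of_partial_sum_le _ _ _
    (infinite_sum_minus _ _ _ _ (proj2 (Hfactory p Hp)) (proj2 (Hfactory q Hq)))).
  intros M. apply Rle_trans with (t * partial_sum (fun n => ones_at_stop tau p (S n)) M).
  - rewrite <- partial_sum_scal. apply partial_sum_le. intros k _. rewrite Hq_thin.
    apply PrN_eq_Y1_thinned_le; [lra|exact Ht].
  - pose proof (ones_at_stop_le_wald tau Htau p ltac:(lra) M).
    pose proof (infinite_sum_ge_partial_sum _ _ M (fun n => PrN_gt_nonneg tau p n ltac:(lra)) He).
    replace ((p - q) * e) with (t * (p * e)) by (unfold t; field; lra).
    apply Rmult_le_compat_l; [lra|]. nra.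
Qed.

Lemma derivative_le_expected_time Dom f tau gamma p d e :
  bernoulli_factory Dom f tau gamma -> open_set Dom -> Dom p -> 0 < p <= 1 ->
  derivable_pt_lim f p d -> infinite_sum (PrN_gt tau p) e -> d <= e.
Proof.
  intros Hfactory Hopen Hp Hp01 Hd He. apply Rnot_lt_le. intros Hlt.
  destruct (Hd (d - e)) as [delta Hdelta]; [lra|].
  destruct (Hopen p Hp) as [r Hr].
  set (h := Rmin (Rmin delta r) p / 2).
  assert (Hh : 0 < h /\ h < delta /\ h < r /\ h < p).
  { pose proof (Rmin_l (Rmin delta r) p). pose proof (Rmin_r (Rmin delta r) p).
    pose proof (Rmin_l delta r). pose proof (Rmin_r delta r).
    assert (0 < Rmin (Rmin delta r) p) by (repeat apply Rmin_glb_lt; try apply cond_pos; lra).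
    unfold h. lra. }
  assert (Hq : Dom (p - h)).
  { apply Hr. unfold disc. replace (p - h - p) with (- h) by ring.
    rewrite Rabs_Ropp, Rabs_right by lra. lra. }
  pose proof (factory_increment_le Dom f tau gamma p (p - h) e Hfactory Hp Hq ltac:(lra) ltac:(lra) He).
  specialize (Hdelta (- h) ltac:(lra)).
  rewrite Rabs_Ropp, Rabs_right in Hdelta by lra. specialize (Hdelta ltac:(lra)).
  replace ((f (p + - h) - f p) / - h) with ((f p - f (p - h)) / h) in Hdelta
    by (replace (p + - h) with (p - h) by ring; field; lra).
  apply Rabs_def2 in Hdelta.
  assert ((f p - f (p - h)) / h <= e); [|lra].
  apply Rmult_le_reg_r with h; [lra|]. unfold Rdiv. rewrite Rmult_assoc, Rinv_l by lra. lra.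
Qed.

Theorem theorem4 (S : R -> Prop) (f : R -> R) :
  open_set S ->
  (forall p, S p -> 0 < p < 1) ->
  (forall e, e > 0 -> exists p, S p /\ p < e) ->
  (forall p, S p -> 0 < f p < 1) ->
  (forall p, S p -> derivable_pt f p) ->
  (exists C delta, C > 0 /\ delta > 0 /\
     forall p d, S p -> p < delta -> derivable_pt_lim f p d -> C * (f p / p) <= d) ->
  forall tau gamma : scheme,
    bernoulli_factory S f tau gamma ->
    fast S tau ->
    exists C' delta', C' > 0 /\ delta' > 0 /\
      forall p, S p -> p < delta' -> ExpN_ge tau p (C' * (f p / p)).
Proof.
  intros Hopen Hdom _ _ Hderivable [C [delta [HC [Hdelta Hslope]]]] tau gamma Hfactory _.
  exists C, delta. split; [exact HC|split; [exact Hdelta|]].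
  intros p Hp Hp_delta e He. destruct (Hderivable p Hp) as [d Hd].
  apply Rle_trans with d; [apply Hslope; assumption|].
  pose proof (Hdom p Hp).
  exact (derivative_le_expected_time S f tau gamma p d e Hfactory Hopen Hp ltac:(lra) Hd He).
Qed.
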